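(* For every $n\geq1$, $r(n)$ equals the number of cyclic and palindromic compositions of $n$ with all parts in $\{2,3\}$, i.e. the number of equivalence classes (under cyclic rotation and reversal) of sequences $(a_1,\dots,a_m)$, $m\geq1$, $a_i\in\{2,3\}$, $\sum_i a_i=n$, such that the reversed sequence $(a_m,\dots,a_1)$ is a cyclic rotation of $(a_1,\dots,a_m)$.
   Context: The (shifted) Padovan sequence is $q(1)=0$, $q(2)=1$, $q(3)=1$, $q(n)=q(n-2)+q(n-3)$ for $n\geq4$. The sequence $r$ is defined by $r(2k-1)=q(k)$ and $r(2k)=q(k+2)$ for $k\geq1$. *)

From mathcomp Require Import all_boot.
Set Implicit Arguments. Unset Strict Implicit. Unset Printing Implicit Defensive.

(* Shifted Padovan sequence: q 1 = 0, q 2 = 1, q 3 = 1,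
   q n = q (n-2) + q (n-3) for n >= 4.  (q 0 is never used.) *)
Fixpoint q (n : nat) : nat :=
  match n with
  | 0 | 1 => 0
  | 2 | 3 => 1
  | (((m.+1 as j).+1 as k).+1).+1 => q k + q j
  end.

Definition r (n : nat) : nat :=
  if odd n then q (n.+1)./2 else q (n./2 + 2).

Fixpoint words23 (k : nat) : seq (seq nat) :=
  match k with
  | 0 => [:: [::]]
  | k.+1 => [seq x :: w | x <- [:: 2; 3], w <- words23 k]
  end.

(* All words of length at most n over {2,3} (a finite universe containing
   every composition of n with parts in {2,3}, since parts are >= 2). *)
Definition cand (n : nat) : seq (seq nat) :=
  flatten [seq words23 k | k <- iota 0 n.+1].

Definition comp23 (n : nat) (s : seq nat) : bool :=
  [&& 0 < size s, all (fun a => (a == 2) || (a == 3)) s & sumn s == n].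

Definition cyc_pal (s : seq nat) : bool :=
  has (fun k => rev s == rot k s) (iota 0 (size s)).

Definition dih_equiv (s t : seq nat) : bool :=
  has (fun k => (t == rot k s) || (t == rot k (rev s))) (iota 0 (size s)).

Definition CP23 (n : nat) : seq (seq nat) :=
  undup [seq s <- cand n | comp23 n s && cyc_pal s].

(* Number of equivalence classes: each class is represented by the list of
   its members in CP23 n; count the distinct such lists. *)
Definition num_cyc_pal_classes (n : nat) : nat :=
  size (undup [seq [seq t <- CP23 n | dih_equiv s t] | s <- CP23 n]).

From mathcomp Require Import all_boot zify.
Set Implicit Arguments. Unset Strict Implicit. Unset Printing Implicit Defensive.

(* The dihedral class of a cyclic palindrome s is its orbit under rotation.
   If rev s = rot^c s and p is the rotation period of s, then rot^i s is a
   palindrome iff c = 2i (mod p), and satisfies rev t = rot 1 t iff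
   c = 2i + 1 (mod p).  As i runs over one period, 2i and 2i + 1 hit every
   residue mod p exactly twice, so summing these two indicators over the
   class gives 2.  Twice the number of classes is therefore P(n) + L(n),
   where P(n) counts the palindromic compositions of n with parts in {2,3}
   and L(n) those with rev t = rot 1 t, i.e. a part followed by a palindrome:
   L(n) = P(n-2) + P(n-3).  Both P and r satisfy f(m+6) = f(m+2) + f(m),
   which with the cases n < 9 gives P(n) + L(n) = 2 r(n). *)

Section CyclicRotation.
Variable T : eqType.
Implicit Types x y : seq T.

(* Unlike [rot k], which is stuck at [x] once [k >= size x], iterating
   [rot 1] is an action of (nat, +). *)
Definition crot k x := iter k (rot 1) x.

Lemma crotD a b x : crot (a + b) x = crot a (crot b x).
Proof. exact: iterD. Qed.

Lemma crotS k x : crot k.+1 x = rot 1 (crot k x).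
Proof. by []. Qed.

Lemma crot_inj k : injective (crot k).
Proof. by elim: k => // k IH x y; rewrite !crotS => /rot_inj/IH. Qed.

Lemma crot_small k x : k <= size x -> crot k x = rot k x.
Proof.
elim: k => [|k IH] kx; first by rewrite rot0.
by rewrite crotS IH -?rotS // ltnW.
Qed.

Lemma crot_mul_size j x : crot (j * size x) x = x.
Proof.
elim: j => [|j IH]; first by rewrite mul0n.
by rewrite mulSn crotD IH crot_small ?rot_size.
Qed.

Lemma crotE k x : crot k x = rot (k %% size x) x.
Proof.
case: (posnP (size x)) => [/size0nil-> | x_gt0].
  by rewrite /crot iter_fix.
by rewrite {1}(divn_eq k (size x)) addnC crotD crot_mul_size crot_small // ltnW ?ltn_pmod.
Qed.

Lemma size_crot k x : size (crot k x) = size x.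
Proof. by rewrite crotE size_rot. Qed.

Lemma crotK k x : crot ((size x).-1 * k) (crot k x) = x.
Proof.
case: x => [|a s]; first by rewrite !crotE.
by rewrite -crotD -mulSnr mulnC; exact: crot_mul_size.
Qed.

Lemma crot_rev_crot k x : crot k (rev (crot k x)) = rev x.
Proof.
by rewrite [crot k (rev _)]crotE size_rev size_crot crotE rev_rot rotrK.
Qed.

Lemma rev_crot_rotation x i :
  (exists c, rev x = crot c x) -> exists c, rev (crot i x) = crot c (crot i x).
Proof.
move=> [c xc]; set u := (size x).-1 * i.
have crotK_x y : size y = size x -> crot u (crot i y) = y by move=> yx; rewrite /u -yx crotK.
exists (u + c + u); rewrite crotD crotK_x // crotD -xc -(crot_rev_crot i x).
by rewrite crotK_x // size_rev size_crot.
Qed.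

End CyclicRotation.

Section Period.
Variables (T : eqType) (x : seq T).

Lemma exists_crot_period : exists j, (0 < j) && (crot j x == x).
Proof.
case: x => [|a s]; first by exists 1.
by exists (size (a :: s)); rewrite crotE modnn rot0 eqxx.
Qed.

Definition period := ex_minn exists_crot_period.

Lemma period_gt0 : 0 < period.
Proof. by rewrite /period; case: ex_minnP => p /andP[]. Qed.

Lemma crot_period : crot period x = x.
Proof. by rewrite /period; case: ex_minnP => p /andP[_ /eqP]. Qed.

Lemma period_min j : 0 < j -> crot j x = x -> period <= j.
Proof.
move=> j_gt0 xj; rewrite /period; case: ex_minnP => p _; apply.
by rewrite j_gt0 xj eqxx.
Qed.

Lemma crot_mod_period k : crot (k %% period) x = crot k x.
Proof.
have crot_mulp j : crot (j * period) x = x.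
  by elim: j => // j IH; rewrite mulSn crotD IH crot_period.
by rewrite {2}(divn_eq k period) addnC crotD crot_mulp.
Qed.

Lemma period_dvd j : crot j x = x -> period %| j.
Proof.
move=> xj; rewrite /dvdn; apply: contraTT (ltn_pmod j period_gt0) => jp.
by rewrite -leqNgt period_min ?lt0n // crot_mod_period.
Qed.

Lemma eq_crot a b : (crot a x == crot b x) = (a == b %[mod period]).
Proof.
apply/eqP/eqP => [|ab]; last by rewrite -crot_mod_period ab crot_mod_period.
wlog le_ab : a b / a <= b => [hwlog xab|xab].
  by case/orP: (leq_total a b) => le; [exact: hwlog | exact/esym/hwlog/esym].
have : crot a (crot (b - a) x) = crot a x by rewrite -crotD subnKC // xab.
by move/crot_inj/period_dvd; rewrite -eqn_mod_dvd // => /eqP.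
Qed.

End Period.

Lemma sum_nat_even_odd (F : nat -> nat) n :
  \sum_(0 <= i < n) (F i.*2 + F i.*2.+1) = \sum_(0 <= j < n.*2) F j.
Proof.
elim: n => [|n IH]; first by rewrite !big_geq.
by rewrite doubleS !big_nat_recr //= IH addnA.
Qed.

Lemma sum_eqmod p c : 0 < p -> \sum_(0 <= j < p) (c == j %[mod p]) = 1.
Proof.
move=> p_gt0; rewrite (eq_big_nat _ _ (F2 := fun j => (j == c %% p) : nat)).
  by rewrite -big_mkcond big_nat1_eq ltn_pmod.
by move=> j /andP[_ jp]; rewrite (modn_small jp) eq_sym.
Qed.

Lemma sum_eqmod_even_odd p c : 0 < p ->
  \sum_(0 <= i < p) ((c == i.*2 %[mod p]) + (c == i.*2.+1 %[mod p])) = 2.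
Proof.
move=> p_gt0; rewrite (sum_nat_even_odd (fun j => (c == j %[mod p]) : nat)) -addnn.
have second_half : \sum_(p <= j < p + p) (c == j %[mod p]) = \sum_(0 <= j < p) (c == j %[mod p]).
  by rewrite -{1}[p]add0n big_addn addnK; apply: eq_bigr => j _; rewrite modnDr.
by rewrite (big_cat_nat _ (leq_addr p p)) //= second_half sum_eqmod.
Qed.

Definition palindrome {T : eqType} (y : seq T) := rev y == y.
Definition rot1_palindrome {T : eqType} (y : seq T) := rev y == rot 1 y.
Definition pal_weight {T : eqType} (y : seq T) : nat := palindrome y + rot1_palindrome y.

Lemma sum_pal_weight_rotations (T : eqType) (x : seq T) c : rev x = crot c x ->
  \sum_(0 <= i < period x) pal_weight (crot i x) = 2.
Proof.
move=> xc; rewrite -(sum_eqmod_even_odd c (period_gt0 x)); apply: eq_bigr => i _.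
have shift j : (rev (crot i x) == crot j (crot i x)) = (c == i.*2 + j %[mod period x]).
  rewrite -(inj_eq (@crot_inj _ i)) crot_rev_crot xc -!crotD eq_crot.
  by rewrite addnAC addnn.
by move: (shift 0) (shift 1); rewrite addn0 addn1 => <- <-.
Qed.

Lemma sum_nat_bool (T : Type) (P : pred T) (s : seq T) : \sum_(t <- s) P t = count P s.
Proof. by elim: s => [|t s IH]; rewrite ?big_nil ?big_cons ?IH. Qed.

Section SumOverClasses.
Variables (T : eqType) (E : rel T) (U : seq T).
Hypothesis E_refl : forall s, s \in U -> E s s.
Hypothesis E_sym : forall s t, s \in U -> t \in U -> E s t -> E t s.
Hypothesis E_trans : forall s t u, s \in U -> t \in U -> u \in U -> E s t -> E t u -> E s u.

Definition eq_class s := filter (E s) U.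
Definition eq_classes := undup (map eq_class U).

Lemma eq_classE s t : s \in U -> t \in U -> E s t -> eq_class s = eq_class t.
Proof.
move=> sU tU st; apply: eq_in_filter => u uU; apply/idP/idP => [su|].
  exact: E_trans (E_sym sU tU st) su.
exact: E_trans st.
Qed.

Lemma count_eq_classes t : t \in U -> count (fun C => t \in C) eq_classes = 1.
Proof.
move=> tU; rewrite (@eq_in_count _ _ (pred1 (eq_class t))).
  by rewrite count_uniq_mem ?undup_uniq // mem_undup map_f.
move=> C; rewrite mem_undup => /mapP[s sU ->] /=; rewrite mem_filter tU andbT.
apply/idP/eqP => [st|st]; first exact: eq_classE.
have : t \in eq_class t by rewrite mem_filter tU E_refl.
by rewrite -st mem_filter => /andP[].
Qed.

Lemma sum_eq_classes (f : T -> nat) :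
  \sum_(t <- U) f t = \sum_(C <- eq_classes) \sum_(t <- C) f t.
Proof.
transitivity (\sum_(t <- U) \sum_(C <- eq_classes) (t \in C) * f t).
  apply: eq_big_seq => t tU.
  by rewrite -big_distrl /= sum_nat_bool count_eq_classes ?mul1n.
rewrite exchange_big big_seq [RHS]big_seq; apply: eq_bigr => C.
rewrite /eq_classes mem_undup => /mapP[s sU ->].
rewrite big_filter [RHS]big_mkcond big_seq [RHS]big_seq; apply: eq_bigr => t tU.
by rewrite mem_filter tU andbT; case: (E s t); rewrite ?mul1n ?mul0n.
Qed.

Lemma sum_eq_classes_const (f : T -> nat) w :
    (forall s, s \in U -> \sum_(t <- eq_class s) f t = w) ->
  \sum_(t <- U) f t = w * size eq_classes.
Proof.
move=> class_sum; rewrite sum_eq_classes -sum1_size big_distrr big_seq [RHS]big_seq.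
apply: eq_bigr => C; rewrite /eq_classes mem_undup => /mapP[s sU ->].
by rewrite class_sum //= muln1.
Qed.

End SumOverClasses.

Definition part23 (a : nat) := (a == 2) || (a == 3).

Lemma mem_words23 k t : (t \in words23 k) = (size t == k) && all part23 t.
Proof.
elim: k t => [|k IH] [|a t] //=; rewrite !mem_cat in_nil orbF.
  by apply/negbTE/norP; split; apply/mapP => -[].
have mem_cons b : (a :: t \in [seq b :: w | w <- words23 k]) = (a == b) && (t \in words23 k).
  by apply/mapP/andP => [[w wk [-> ->]] | [/eqP -> tk]]; last exists t.
rewrite !mem_cons IH eqSS /part23.
by case: (a == 2); case: (a == 3); case: (size t == k); case: all.
Qed.

Lemma mem_cand n t : (t \in cand n) = (size t <= n) && all part23 t.
Proof.
apply/flatten_mapP/andP => [[k] | [tn t23]].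
  by rewrite mem_iota mem_words23 => /andP[_ kn] /andP[/eqP -> ->].
by exists (size t); rewrite ?mem_iota ?mem_words23 ?eqxx.
Qed.

Lemma size_le_sumn t : all part23 t -> size t <= sumn t.
Proof. by elim: t => //= a t IH /andP[/orP[]/eqP-> /IH]; lia. Qed.

Lemma cyc_palP (t : seq nat) :
  reflect (0 < size t /\ exists c, rev t = crot c t) (cyc_pal t).
Proof.
apply: (iffP hasP) => [[k] | [t0 [c tc]]].
  rewrite mem_iota => /andP[_ kt] /eqP tk; split; first exact: leq_ltn_trans kt.
  by exists k; rewrite crot_small // ltnW.
exists (c %% size t); first by rewrite mem_iota ltn_pmod.
by rewrite -crotE tc.
Qed.

Lemma mem_CP23 n t : (t \in CP23 n) = [&& all part23 t, sumn t == n & cyc_pal t].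
Proof.
rewrite mem_undup mem_filter mem_cand /comp23 -/(all part23 t).
apply/idP/idP => [/andP[/andP[/and3P[_ -> ->] ->] _] // | /and3P[t23 /eqP tn cp]].
have [t0 _] := cyc_palP _ cp.
by rewrite t0 t23 tn eqxx cp -tn size_le_sumn.
Qed.

Lemma crot_CP23 n t i : t \in CP23 n -> crot i t \in CP23 n.
Proof.
rewrite !mem_CP23 crotE => /and3P[t23 tn /cyc_palP[t0 rt]].
have rot_perm : perm_eq (rot (i %% size t) t) t by rewrite perm_rot.
rewrite (perm_all _ rot_perm) t23 sumn_rot tn -crotE.
by apply/cyc_palP; rewrite size_crot; split; last exact: rev_crot_rotation.
Qed.

Lemma dih_equivP s t : cyc_pal s -> reflect (exists i, t = crot i s) (dih_equiv s t).
Proof.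
move=> /cyc_palP[s0 s_rev]; apply: (iffP hasP) => [[k] | [i ->]].
  have [c sc] := s_rev; rewrite mem_iota => /andP[_ ks] /orP[] /eqP ->.
    by exists k; rewrite crot_small // ltnW.
  by exists (k + c); rewrite sc crotD [RHS]crot_small // size_crot ltnW.
exists (i %% size s); first by rewrite mem_iota ltn_pmod.
by rewrite -crotE eqxx.
Qed.

Lemma CP23_cyc_pal n s : s \in CP23 n -> cyc_pal s.
Proof. by rewrite mem_CP23 => /and3P[]. Qed.

Lemma eq_class_dih_equiv n s : s \in CP23 n ->
  perm_eq (eq_class dih_equiv (CP23 n) s) [seq crot i s | i <- iota 0 (period s)].
Proof.
move=> sU; have s_cp := CP23_cyc_pal sU; apply: uniq_perm.
- exact/filter_uniq/undup_uniq.
- rewrite map_inj_in_uniq ?iota_uniq // => i j; rewrite !mem_iota !add0n => ip jp /eqP.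
  by rewrite eq_crot !modn_small // => /eqP.
move=> t; rewrite mem_filter.
apply/andP/mapP => [[/(dih_equivP _ s_cp)[i ->] _] | [i _ ->]].
  by exists (i %% period s); rewrite ?mem_iota ?add0n ?ltn_pmod ?period_gt0 ?crot_mod_period.
by split; [apply/(dih_equivP _ s_cp); exists i | exact: crot_CP23].
Qed.

Lemma sum_pal_weight_CP23 n :
  \sum_(t <- CP23 n) pal_weight t = 2 * num_cyc_pal_classes n.
Proof.
have dihP s t (sU : s \in CP23 n) := dih_equivP t (CP23_cyc_pal sU).
apply: sum_eq_classes_const => [|||s sU].
- by move=> s sU; apply/(dihP s s sU); exists 0.
- move=> s t sU tU /(dihP s t sU)[i ti]; apply/(dihP t s tU).
  by exists ((size s).-1 * i); rewrite ti crotK.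
- move=> s t u sU tU _ /(dihP s t sU)[i ti] /(dihP t u tU)[j ->].
  by apply/(dihP s _ sU); exists (j + i); rewrite ti crotD.
have [_ [c sc]] := cyc_palP _ (CP23_cyc_pal sU).
rewrite (perm_big _ (eq_class_dih_equiv sU)) big_map -(sum_pal_weight_rotations sc).
by rewrite /index_iota subn0.
Qed.

Definition wrap (a : nat) (x : seq nat) := a :: rcons x a.

Fixpoint pal23 (n : nat) : seq (seq nat) :=
  match n with
  | 0 => [:: [::]]
  | 1 => [::]
  | 2 => [:: [:: 2]]
  | 3 => [:: [:: 3]]
  | m.+4 => map (wrap 2) (pal23 m) ++
            (if m is k.+2 then map (wrap 3) (pal23 k) else [::])
  end.

Definition rot1_pal23 (n : nat) : seq (seq nat) :=
  [seq a :: x | a <- [seq a <- [:: 2; 3] | a <= n], x <- pal23 (n - a)].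

Lemma wrap_inj a : injective (wrap a).
Proof. by move=> x y [] /eqP; rewrite eqseq_rcons => /andP[/eqP]. Qed.

Lemma sumn_wrap a x : sumn (wrap a x) = a + sumn x + a.
Proof. by rewrite /= -cats1 sumn_cat /= addn0 addnA. Qed.

Lemma all_wrap P a x : all P (wrap a x) = P a && all P x.
Proof. by rewrite /= all_rcons andbA andbb. Qed.

Lemma palindrome_wrap a x : palindrome (wrap a x) = palindrome x.
Proof. by rewrite /palindrome /wrap rev_cons rev_rcons /= eqseq_cons eqseq_rcons !eqxx andbT. Qed.

Lemma pal23_sound n t : t \in pal23 n -> [&& all part23 t, sumn t == n & palindrome t].
Proof.
elim/ltn_ind: n t => -[|[|[|[|m]]]] IH t //=; try by rewrite inE => /eqP ->.
have wrap_sound a k : a + k + a = m.+4 -> part23 a -> k < m.+4 ->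
    t \in map (wrap a) (pal23 k) -> [&& all part23 t, sumn t == m.+4 & palindrome t].
  move=> e a23 km /mapP[x /(IH k km)/and3P[x23 /eqP xk xpal] ->].
  by rewrite all_wrap sumn_wrap palindrome_wrap a23 x23 xk e eqxx xpal.
rewrite mem_cat => /orP[]; first by apply: wrap_sound => //; lia.
by case: m IH wrap_sound => [|[|k]] // IH wrap_sound; apply: wrap_sound => //; lia.
Qed.

Lemma pal23_complete n t : [&& all part23 t, sumn t == n & palindrome t] -> t \in pal23 n.
Proof.
elim/ltn_ind: n t => n IH t /and3P[t23 /eqP tn tpal]; subst n.
move: IH t23 tpal; case: t => [|a t] // + + +; case/lastP: t => [|x b] IH t23 tpal.
  by case/andP: t23 => /orP[]/eqP->.
have [ba xpal] : b = a /\ palindrome x.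
  move: tpal; rewrite /palindrome rev_cons rev_rcons /= eqseq_cons eqseq_rcons.
  by case/and3P => /eqP.
subst b; rewrite -/(wrap a x) in IH t23 *; rewrite sumn_wrap in IH *.
move: t23; rewrite all_wrap => /andP[a23 x23].
have x_in : x \in pal23 (sumn x).
  apply: IH; last by rewrite x23 eqxx xpal.
  by case/orP: a23 => /eqP->; lia.
case/orP: a23 => /eqP->.
  by rewrite (_ : 2 + sumn x + 2 = (sumn x).+4) /= ?mem_cat ?map_f //; lia.
by rewrite (_ : 3 + sumn x + 3 = (sumn x).+2.+4) /= ?mem_cat ?map_f ?orbT //; lia.
Qed.

Lemma mem_pal23 n t : (t \in pal23 n) = [&& all part23 t, sumn t == n & palindrome t].
Proof. by apply/idP/idP => [/pal23_sound | /pal23_complete]. Qed.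

Lemma uniq_pal23 n : uniq (pal23 n).
Proof.
elim/ltn_ind: n => -[|[|[|[|m]]]] IH //=.
rewrite cat_uniq (map_inj_uniq (@wrap_inj 2)) IH; last by lia.
case: m IH => [|[|k]] IH; rewrite ?andbT //.
rewrite (map_inj_uniq (@wrap_inj 3)) IH ?andbT; last by lia.
by apply/hasPn => _ /mapP[x _ ->]; apply/mapP => -[y _ [/eqP]].
Qed.

Lemma mem_rot1_pal23 n t : 0 < n ->
  (t \in rot1_pal23 n) = [&& all part23 t, sumn t == n & rot1_palindrome t].
Proof.
case: t => [|b y] n_gt0.
  by case: n n_gt0 => //= n _; apply/negbTE/allpairsPdep => -[a [x [_ _]]].
have -> : rot1_palindrome (b :: y) = palindrome y.
  by rewrite /rot1_palindrome rot1_cons rev_cons eqseq_rcons eqxx andbT.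
apply/allpairsPdep/and3P => [[a [x []]] | ].
  rewrite mem_filter !inE mem_pal23 => /andP[an a23] /and3P[x23 /eqP xn xpal] [-> ->].
  split=> //=; last by rewrite xn subnKC.
  by rewrite x23 andbT.
case=> /andP[b23 y23] /eqP yn ypal; exists b, y; split=> //.
  by rewrite mem_filter -yn leq_addr !inE; exact: b23.
by rewrite mem_pal23 ypal -yn addKn eqxx !andbT; exact: y23.
Qed.

Lemma uniq_rot1_pal23 n : uniq (rot1_pal23 n).
Proof.
apply: allpairs_uniq_dep; first exact: filter_uniq.
  by move=> a _; exact: uniq_pal23.
by move=> [a x] [b y] _ _ [/= -> ->].
Qed.

Lemma count_CP23_eq_size n (P : pred (seq nat)) L : 0 < n -> uniq L ->
    (forall t, P t -> exists c, rev t = crot c t) ->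
    (forall t, (t \in L) = [&& all part23 t, sumn t == n & P t]) ->
  count P (CP23 n) = size L.
Proof.
move=> n_gt0 L_uniq P_rev memL; rewrite -size_filter; apply/perm_size/uniq_perm => //.
  exact/filter_uniq/undup_uniq.
move=> t; rewrite mem_filter mem_CP23 memL.
apply/andP/and3P => [[Pt /and3P[t23 tn _]] | [t23 tn Pt]]; first by split.
split=> //; rewrite t23 tn /=; apply/cyc_palP; split; last exact: P_rev.
by move: tn n_gt0; case: t {t23 Pt} => // /eqP <-.
Qed.

Lemma count_palindrome_CP23 n : 0 < n -> count palindrome (CP23 n) = size (pal23 n).
Proof.
move=> n_gt0; apply: count_CP23_eq_size => //; first exact: uniq_pal23.
  by move=> t /eqP tpal; exists 0.
exact: mem_pal23.
Qed.

Lemma count_rot1_palindrome_CP23 n : 0 < n ->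
  count rot1_palindrome (CP23 n) = size (rot1_pal23 n).
Proof.
move=> n_gt0; apply: count_CP23_eq_size => //; first exact: uniq_rot1_pal23.
  by move=> t /eqP tpal; exists 1.
by move=> t; rewrite mem_rot1_pal23.
Qed.

Lemma size_pal23_rec m : size (pal23 m.+2.+4) = size (pal23 m.+2) + size (pal23 m).
Proof. by rewrite /= size_cat !size_map. Qed.

Lemma size_rot1_pal23 m : size (rot1_pal23 m.+3) = size (pal23 m.+1) + size (pal23 m).
Proof.
rewrite size_allpairs_dep (_ : [seq a <- _ | a <= m.+3] = [:: 2; 3]) //.
by rewrite /= !subSS !subn0 addn0.
Qed.

Lemma r_double j : r j.*2 = q j.+2.
Proof. by rewrite /r odd_double doubleK addn2. Qed.

Lemma r_doubleS j : r j.*2.+1 = q j.+1.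
Proof. by rewrite /r /= odd_double /= doubleK. Qed.

Lemma r_rec m : r m.+2.+4 = r m.+2 + r m.
Proof.
rewrite -(odd_double_half m); case: (odd m); rewrite ?add1n ?add0n -!doubleS.
  by rewrite !r_doubleS.
by rewrite !r_double.
Qed.

Lemma size_pal23D_rot1_pal23 n : 0 < n ->
  size (pal23 n) + size (rot1_pal23 n) = 2 * r n.
Proof.
elim/ltn_ind: n => n IH n_gt0.
have [n_small | n_large] := ltnP n 9.
  by clear IH; move: n_gt0 n_small; do 9 (case: n => [//|n]).
have [m n_eq] : exists m, n = m.+3.+2.+4 by exists (n - 9); lia.
subst n; rewrite r_rec mulnDr -!IH; try lia.
rewrite (size_rot1_pal23 m.+2.+4) (size_rot1_pal23 m.+2) (size_rot1_pal23 m).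
rewrite (size_pal23_rec m.+3) (size_pal23_rec m.+1) (size_pal23_rec m); lia.
Qed.

Theorem proposition3p3 (n : nat) : 1 <= n -> r n = num_cyc_pal_classes n.
Proof.
move=> n_gt0; apply/eqP; rewrite -(eqn_pmul2l (isT : 0 < 2)); apply/eqP.
rewrite -sum_pal_weight_CP23 -size_pal23D_rot1_pal23 // big_split /= !sum_nat_bool.
by rewrite count_palindrome_CP23 // count_rot1_palindrome_CP23.
Qed.
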